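(* Let $\{\varphi_i\}_{i=1}^M\subset\mathbb{R}^N$ be a set of nonzero vectors. If the family of hyperplanes $\{\varphi_i^\perp\}_{i=1}^M$ does norm retrieval, then either $\{\varphi_i\}_{i=1}^M$ spans $\mathbb{R}^N$ or $\{\varphi_i\}_{i=1}^M$ is linearly dependent.
   Context: For a nonzero vector $\varphi\in\mathbb{R}^N$, $\varphi^\perp=\{x\in\mathbb{R}^N:\langle x,\varphi\rangle=0\}$. A family of subspaces $\{W_i\}_{i=1}^M$ of $\mathbb{R}^N$ with orthogonal projections $\{P_i\}_{i=1}^M$ does norm retrieval if for all $x,y\in\mathbb{R}^N$, $\|P_ix\|=\|P_iy\|$ for all $i$ implies $\|x\|=\|y\|$. *)

From mathcomp Require Import all_boot all_order all_algebra.
From mathcomp Require Import reals.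
Set Implicit Arguments. Unset Strict Implicit. Unset Printing Implicit Defensive.
Import Order.TTheory GRing.Theory Num.Theory.
Local Open Scope ring_scope.

(* Vectors of R^N are row vectors 'rV[R]_N; subspaces are row spaces of matrices. *)
Section Defs.
Variables (R : realType) (N : nat).

Definition dotv (x y : 'rV[R]_N) : R := (x *m y^T) 0 0.

Definition normv (x : 'rV[R]_N) : R := Num.sqrt (dotv x x).

Definition perp (phi : 'rV[R]_N) : 'M[R]_N := kermx phi^T.

Definition is_orth_proj (W : 'M[R]_N) (P : 'rV[R]_N -> 'rV[R]_N) : Prop :=
  forall x, (P x <= W)%MS /\
            (forall w, (w <= W)%MS -> dotv (x - P x) w = 0).

Definition norm_retrieval (M : nat) (W : 'I_M -> 'M[R]_N) : Prop :=
  forall P : 'I_M -> 'rV[R]_N -> 'rV[R]_N,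
    (forall i, is_orth_proj (W i) (P i)) ->
    forall x y, (forall i, normv (P i x) = normv (P i y)) -> normv x = normv y.

End Defs.

(* If the phi_i are independent but do not span, pick a unit vector u
   orthogonal to all of them and a vector s orthogonal to u with
   <s, phi_i> = |phi_i| for every i.  Since |P_i z|^2 = |z|^2 - <z, phi_i>^2 / |phi_i|^2,
   the vectors x = s + u and y = |s| u have |P_i x|^2 = |s|^2 = |P_i y|^2 for every i,
   while |x|^2 = |s|^2 + 1 <> |y|^2. *)

From mathcomp Require Import all_boot all_order all_algebra.
From mathcomp Require Import reals.
From mathcomp Require Import ring.
Import Order.TTheory GRing.Theory Num.Theory.
Local Open Scope ring_scope.

Set Implicit Arguments.
Unset Strict Implicit.
Unset Printing Implicit Defensive.

Section InnerProduct.
Context {R : realType} {N : nat}.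
Implicit Types (x y z phi : 'rV[R]_N) (a : R).

Lemma dotvE x y : dotv x y = \sum_j x 0 j * y 0 j.
Proof. by rewrite /dotv mxE; apply: eq_bigr => j _; rewrite mxE. Qed.

Lemma dotvC x y : dotv x y = dotv y x.
Proof. by rewrite /dotv -[y *m _]trmxK trmx_mul trmxK [RHS]mxE. Qed.

Lemma dotvDl x y z : dotv (x + y) z = dotv x z + dotv y z.
Proof. by rewrite /dotv mulmxDl mxE. Qed.

Lemma dotvZl a x y : dotv (a *: x) y = a * dotv x y.
Proof. by rewrite /dotv -scalemxAl mxE. Qed.

Lemma dotvBl x y z : dotv (x - y) z = dotv x z - dotv y z.
Proof. by rewrite dotvDl -scaleN1r dotvZl mulN1r. Qed.

Lemma dotvDr x y z : dotv z (x + y) = dotv z x + dotv z y.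
Proof. by rewrite !(dotvC z) dotvDl. Qed.

Lemma dotvZr a x y : dotv y (a *: x) = a * dotv y x.
Proof. by rewrite !(dotvC y) dotvZl. Qed.

Lemma dotvBr x y z : dotv z (x - y) = dotv z x - dotv z y.
Proof. by rewrite !(dotvC z) dotvBl. Qed.

Lemma dotvv_ge0 x : 0 <= dotv x x.
Proof. by rewrite dotvE; apply: sumr_ge0 => j _; rewrite -expr2 sqr_ge0. Qed.

Lemma dotvv_eq0 x : (dotv x x == 0) = (x == 0).
Proof.
apply/idP/eqP => [|->]; last by rewrite dotvE big1 // => j _; rewrite mxE mul0r.
rewrite dotvE psumr_eq0 => [/allP x2_eq0|j _]; last by rewrite -expr2 sqr_ge0.
apply/rowP => j; rewrite mxE.
by apply/eqP; rewrite -sqrf_eq0 expr2; apply: x2_eq0; rewrite mem_index_enum.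
Qed.

Lemma eq_normv x y : (normv x == normv y) = (dotv x x == dotv y y).
Proof. by rewrite eqr_sqrt ?dotvv_ge0. Qed.

Lemma dotv_normalize x : x != 0 -> dotv ((normv x)^-1 *: x) ((normv x)^-1 *: x) = 1.
Proof.
rewrite -dotvv_eq0 => xx_neq0.
rewrite dotvZl dotvZr mulrA -expr2 exprVn sqr_sqrtr ?dotvv_ge0 //.
exact: mulVf.
Qed.

Lemma dotv_row m (F : 'M[R]_(m, N)) x i : dotv x (row i F) = (x *m F^T) 0 i.
Proof. by rewrite dotvE !mxE; apply: eq_bigr => j _; rewrite !mxE. Qed.

Lemma sub_perp phi w : (w <= perp phi)%MS = (dotv w phi == 0).
Proof.
rewrite /perp sub_kermx /dotv; apply/eqP/eqP => [->|w_phi]; first by rewrite mxE.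
by apply/rowP => i; rewrite ord1 w_phi mxE.
Qed.

(* Junk value: for [phi = 0] the coefficient is [0 / 0 = 0], so [projp 0] is the
   identity, which is indeed the projection onto [perp 0], the whole space. *)
Definition projp phi x := x - (dotv x phi / dotv phi phi) *: phi.

Lemma projp_orth phi : is_orth_proj (perp phi) (projp phi).
Proof.
move=> x; split=> [|w]; rewrite sub_perp.
  have [->|phi_neq0] := eqVneq phi 0; first by rewrite /dotv trmx0 mulmx0 mxE.
  by rewrite /projp dotvBl dotvZl mulfVK ?subrr ?dotvv_eq0.
by move=> /eqP w_phi; rewrite /projp opprB addrC subrK dotvZl (dotvC phi) w_phi mulr0.
Qed.

Lemma dotv_projp phi x :
  dotv (projp phi x) (projp phi x) = dotv x x - dotv x phi ^+ 2 / dotv phi phi.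
Proof.
rewrite /projp dotvBl !dotvBr !dotvZl !dotvZr (dotvC phi x).
have [->|phi_neq0] := eqVneq (dotv phi phi) 0; first by rewrite !invr0 !mulr0 !mul0r !subr0.
by field.
Qed.

Lemma exists_unit_orth_rows m (F : 'M[R]_(m, N)) :
  ~~ row_full F -> exists2 u, dotv u u = 1 & forall i, dotv u (row i F) = 0.
Proof.
move=> F_not_full.
have ker_neq0 : kermx F^T != 0.
  rewrite -mxrank_eq0 mxrank_ker mxrank_tr subn_eq0 -ltnNge ltn_neqAle.
  by rewrite rank_leq_col andbT.
pose w := nz_row (kermx F^T).
have wF : w *m F^T = 0 by apply/sub_kermxP; exact: nz_row_sub.
exists ((normv w)^-1 *: w); first by rewrite dotv_normalize ?nz_row_eq0.
by move=> i; rewrite dotvZl dotv_row wF mxE mulr0.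
Qed.

Lemma exists_dual_rows m (F : 'M[R]_(m, N)) (b : 'rV[R]_m) :
  row_free F -> exists s, forall i, dotv s (row i F) = b 0 i.
Proof.
move=> F_free; have FT_full : row_full F^T by rewrite /row_full mxrank_tr.
exists (b *m pinvmx F^T) => i.
by rewrite dotv_row mulmxKpV // submx_full.
Qed.

Section Counterexample.
Variables (M : nat) (phi : 'I_M -> 'rV[R]_N) (u s : 'rV[R]_N).
Hypotheses (phi_neq0 : forall i, phi i != 0) (u_unit : dotv u u = 1).
Hypotheses (u_orth : forall i, dotv u (phi i) = 0) (s_orth : dotv s u = 0).
Hypothesis s_dual : forall i, dotv s (phi i) ^+ 2 = dotv (phi i) (phi i).

Lemma perp_not_norm_retrieval : ~ norm_retrieval (fun i => perp (phi i)).
Proof.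
pose x := s + u; pose y := normv s *: u.
have xx : dotv x x = dotv s s + 1.
  by rewrite !(dotvDl, dotvDr) s_orth dotvC s_orth u_unit addr0 add0r.
have yy : dotv y y = dotv s s.
  by rewrite dotvZl dotvZr u_unit mulr1 -expr2 sqr_sqrtr ?dotvv_ge0.
have x_phi i : dotv x (phi i) = dotv s (phi i) by rewrite dotvDl u_orth addr0.
have y_phi i : dotv y (phi i) = 0 by rewrite dotvZl u_orth mulr0.
move=> /(_ _ (fun i => projp_orth (phi i)) x y) NR.
suff /eqP : dotv x x = dotv y y by rewrite xx yy -subr_eq0 addrC addKr oner_eq0.
apply/eqP; rewrite -eq_normv; apply/eqP/NR => i; apply/eqP.
rewrite eq_normv !dotv_projp x_phi y_phi s_dual xx yy mulfV ?dotvv_eq0 //.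
by rewrite expr0n /= mul0r !subr0 addrK.
Qed.

End Counterexample.

End InnerProduct.

Theorem mainTheorem3 (R : realType) (N M : nat) (phi : 'I_M -> 'rV[R]_N) :
  (forall i, phi i != 0) ->
  norm_retrieval (fun i => perp (phi i)) ->
  row_full (\matrix_(i < M) phi i) \/ ~~ row_free (\matrix_(i < M) phi i).
Proof.
move=> phi_neq0 NR; set F := \matrix_(i < M) phi i.
have [F_full|F_not_full] := boolP (row_full F); first by left.
have [F_free|] := boolP (row_free F); last by right.
have [u u_unit u_orth_rows] := exists_unit_orth_rows F_not_full.
have u_orth i : dotv u (phi i) = 0 by rewrite -(rowK phi i) u_orth_rows.
have [s0 s0_dual_rows] := exists_dual_rows (\row_i normv (phi i)) F_free.
have s0_dual i : dotv s0 (phi i) = normv (phi i).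
  by rewrite -[in LHS](rowK phi i) s0_dual_rows mxE.
pose s := s0 - dotv s0 u *: u.
have s_orth : dotv s u = 0 by rewrite dotvBl dotvZl u_unit mulr1 subrr.
have s_dual i : dotv s (phi i) ^+ 2 = dotv (phi i) (phi i).
  by rewrite dotvBl dotvZl u_orth mulr0 subr0 s0_dual sqr_sqrtr ?dotvv_ge0.
by case: (perp_not_norm_retrieval phi_neq0 u_unit u_orth s_orth s_dual NR).
Qed.
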